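(* Let $B>0$ and $d\ge1$. The compressor $\mathcal{M}_{B,0}$ is not differentially private, i.e., there is no finite $\epsilon>0$ for which $\mathcal{M}_{B,0}$ is $\epsilon$-differentially private. When $\beta>0$, the compressor $\mathcal{M}_{B,\beta}$ is $d\cdot\log\left(\frac{2B+\beta}{\beta}\right)$-differentially private (for all gradient inputs in $\mathbb{R}^d$).
   Context: For $B>0$, the clipping function is $\mathrm{clip}\{g,B\}=\max\{-B,\min\{B,g\}\}$ for $g\in\mathbb{R}$. For $\beta\ge0$ and $B>0$, the randomized compressor $\mathcal{M}_{B,\beta}:\mathbb{R}^d\to\{-1,1\}^d$ acts independently on each coordinate: for $\boldsymbol g\in\mathbb{R}^d$ with coordinates $g_i$, $[\mathcal{M}_{B,\beta}]_i(\boldsymbol g)=1$ with probability $\frac{B+\beta+\mathrm{clip}\{g_i,B\}}{2B+2\beta}$ and $=-1$ otherwise. A randomized algorithm $\mathcal{M}$ with domain $\mathbb{R}^d$ is $\epsilon$-differentially private if $\Pr[\mathcal{M}(x)\in\mathcal{S}]\le e^{\epsilon}\Pr[\mathcal{M}(y)\in\mathcal{S}]$ for all subsets $\mathcal{S}$ of the range of $\mathcal{M}$ and all $x,y\in\mathbb{R}^d$ with $\|x-y\|_1\le1$. *)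

From HB Require Import structures.
From mathcomp Require Import all_boot all_order all_algebra.
From mathcomp Require Import reals.
From mathcomp Require Import sequences exp.
Set Implicit Arguments.
Unset Strict Implicit.
Unset Printing Implicit Defensive.
Import Order.TTheory GRing.Theory Num.Theory.
Local Open Scope ring_scope.

Definition clip (R : realType) (B g : R) : R := Num.max (- B) (Num.min B g).

(* Output space {-1,1}^d encoded as {ffun 'I_d -> bool}: true = +1, false = -1. *)
Definition out_space (d : nat) := {ffun 'I_d -> bool}.

Definition coord_prob (R : realType) (B beta g : R) (b : bool) : R :=
  let p := (B + beta + clip B g) / (2 * B + 2 * beta) in
  if b then p else 1 - p.

Definition compressor (R : realType) (d : nat) (B beta : R)
    (g : 'rV[R]_d) (s : out_space d) : R :=
  \prod_(i < d) coord_prob B beta (g 0 i) (s i).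

Definition eps_DP (R : realType) (d : nat)
    (M : 'rV[R]_d -> out_space d -> R) (eps : R) : Prop :=
  forall (S : {set out_space d}) (x y : 'rV[R]_d),
    \sum_(i < d) `|x 0 i - y 0 i| <= 1 ->
    \sum_(s in S) M x s <= expR eps * \sum_(s in S) M y s.

(** With [beta > 0] every coordinate outputs each sign with probability in
    [[beta, 2B + beta] / (2B + 2beta)], so the probability of any output vector
    changes by a factor at most [((2B + beta) / beta)^d] between ANY two inputs,
    adjacent or not.  With [beta = 0] the output [+1] has probability
    [(B + clip g) / 2B], which vanishes at [g = -B] but not at [g = -B + 1];
    an event of probability zero on one input and positive on an adjacent one
    rules out every finite privacy level. *)

From HB Require Import structures.
From mathcomp Require Import all_boot all_order all_algebra.
From mathcomp Require Import reals.
From mathcomp Require Import sequences exp.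
From mathcomp Require Import ring lra.
Import Order.TTheory GRing.Theory Num.Theory.
Local Open Scope ring_scope.

Section PrivacyCriteria.

Variables (R : realType) (d : nat) (M : 'rV[R]_d -> out_space d -> R).

Lemma eps_DP_of_ratio (eps : R) :
  (forall x y s, M x s <= expR eps * M y s) -> eps_DP M eps.
Proof.
move=> ratio S x y _; rewrite mulr_sumr.
by apply: ler_sum => s _; exact: ratio.
Qed.

Lemma not_eps_DP_of_null_output (eps : R) (x y : 'rV[R]_d) (s : out_space d) :
  \sum_(i < d) `|x 0 i - y 0 i| <= 1 -> M y s = 0 -> 0 < M x s ->
  ~ eps_DP M eps.
Proof.
move=> adj My0 Mx_gt0 /(_ [set s] x y adj).
by rewrite !big_set1 My0 mulr0 leNgt Mx_gt0.
Qed.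

End PrivacyCriteria.

Section Clip.

Context {R : realType} (B : R).

Lemma clip_ge (g : R) : - B <= clip B g.
Proof. by rewrite /clip le_max lexx. Qed.

Lemma clip_le (g : R) : 0 <= B -> clip B g <= B.
Proof. by move=> B_ge0; rewrite /clip ge_max ge_min lexx andbT; lra. Qed.

Lemma clipN : 0 <= B -> clip B (- B) = - B.
Proof. by move=> B_ge0; rewrite /clip min_r ?maxxx //; lra. Qed.

Lemma clip_gtN (g : R) : 0 < B -> - B < g -> - B < clip B g.
Proof. by move=> B_gt0 g_gtN; rewrite /clip lt_max lt_min g_gtN andbT; lra. Qed.

End Clip.

Section CoordProb.

Context {R : realType} (B beta : R).

Lemma coord_probE (g : R) (b : bool) :
  0 < 2 * B + 2 * beta ->
  coord_prob B beta g b =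
    (B + beta + (if b then clip B g else - clip B g)) / (2 * B + 2 * beta).
Proof.
move=> D_gt0; rewrite /coord_prob; case: b => //.
by field; rewrite gt_eqF.
Qed.

Lemma coord_prob_bounds (g : R) (b : bool) : 0 <= B -> 0 < beta ->
  beta / (2 * B + 2 * beta) <= coord_prob B beta g b
                            <= (2 * B + beta) / (2 * B + 2 * beta).
Proof.
move=> B_ge0 beta_gt0; have D_gt0 : 0 < 2 * B + 2 * beta by lra.
have := clip_ge B g; have := clip_le B g B_ge0.
rewrite coord_probE // !ler_pM2r ?invr_gt0 //; case: b; lra.
Qed.

Lemma coord_prob_ratio (g h : R) (b : bool) : 0 <= B -> 0 < beta ->
  coord_prob B beta g b <= (2 * B + beta) / beta * coord_prob B beta h b.
Proof.
move=> B_ge0 beta_gt0; have D_gt0 : 0 < 2 * B + 2 * beta by lra.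
have /andP[_ le_g] := coord_prob_bounds g b B_ge0 beta_gt0.
have /andP[ge_h _] := coord_prob_bounds h b B_ge0 beta_gt0.
apply: (le_trans le_g).
have -> : (2 * B + beta) / (2 * B + 2 * beta) =
          (2 * B + beta) / beta * (beta / (2 * B + 2 * beta)).
  by field; rewrite !gt_eqF.
by rewrite ler_wpM2l // divr_ge0 //; lra.
Qed.

Lemma compressor_ratio (d : nat) (x y : 'rV[R]_d) (s : out_space d) :
  0 <= B -> 0 < beta ->
  compressor B beta x s <= ((2 * B + beta) / beta) ^+ d * compressor B beta y s.
Proof.
move=> B_ge0 beta_gt0.
rewrite /compressor -[d in _ ^+ d]card_ord -prodr_const -big_split /=.
apply: ler_prod => i _; rewrite coord_prob_ratio // andbT.
have /andP[+ _] := coord_prob_bounds (x 0 i) (s i) B_ge0 beta_gt0.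
by apply: le_trans; rewrite divr_ge0 //; lra.
Qed.

End CoordProb.

Section Unshifted.

Context {R : realType} (B : R).

Lemma coord_prob0_clipN_true : 0 <= B -> coord_prob B 0 (- B) true = 0.
Proof. by move=> B_ge0; rewrite /coord_prob clipN // addr0 subrr mul0r. Qed.

Lemma coord_prob0_clipN_false : 0 <= B -> coord_prob B 0 (- B) false = 1.
Proof.
move=> B_ge0; have -> : coord_prob B 0 (- B) false = 1 - coord_prob B 0 (- B) true by [].
by rewrite coord_prob0_clipN_true // subr0.
Qed.

Lemma coord_prob0_gt0 (g : R) : 0 < B -> - B < g -> 0 < coord_prob B 0 g true.
Proof.
move=> B_gt0 g_gtN; rewrite /coord_prob !addr0 divr_gt0 //; last lra.
by have := clip_gtN B g B_gt0 g_gtN; lra.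
Qed.

End Unshifted.

Theorem theorem2 (R : realType) (B : R) (d : nat) :
  0 < B -> (0 < d)%N ->
  (~ exists eps : R, 0 < eps /\ eps_DP (@compressor R d B 0) eps) /\
  (forall beta : R, 0 < beta ->
     eps_DP (@compressor R d B beta) (d%:R * ln ((2 * B + beta) / beta))).
Proof.
move=> B_gt0 d_gt0; split.
  case=> eps [_]; case: d d_gt0 => // d _.
  pose y : 'rV[R]_d.+1 := const_mx (- B).
  pose x : 'rV[R]_d.+1 := \row_i (- B + (i == ord0)%:R).
  pose s : out_space d.+1 := [ffun i => i == ord0].
  apply: (@not_eps_DP_of_null_output _ _ _ eps x y s).
  - rewrite (bigD1 ord0) //= big1 => [|i i_neq0]; rewrite !mxE ?eqxx.
      by rewrite addrAC subrr add0r normr1 addr0.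
    by rewrite (negbTE i_neq0) addr0 subrr normr0.
  - rewrite /compressor (bigD1 ord0) //= mxE ffunE eqxx.
    by rewrite coord_prob0_clipN_true ?mul0r // ltW.
  - apply: prodr_gt0 => i _; rewrite !mxE ffunE.
    case: eqP => _; last by rewrite addr0 coord_prob0_clipN_false // ltW.
    by apply: coord_prob0_gt0; rewrite // ltrDl ltr01.
move=> beta beta_gt0; apply: eps_DP_of_ratio => x y s.
rewrite expRM_natl lnK ?posrE ?divr_gt0 //; last lra.
by apply: compressor_ratio => //; exact: ltW.
Qed.
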